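(* Consider the setting described in the context and suppose the stepsizes satisfy conditions (A) and (B), and either (C1) or (C2). Then the PDHG method converges in the residuals: $$\lim_{k\to\infty}\|P_k\|^2+\|D_k\|^2=0,$$ where $P_{k+1}=\frac{1}{\tau_k}(x_k-x_{k+1})-A^T(y_k-y_{k+1})$ and $D_{k+1}=\frac{1}{\sigma_k}(y_k-y_{k+1})-A(x_k-x_{k+1})$.
   Context: Let $A\in\mathbb{R}^{M\times N}$, let $f$ and $g$ be convex functions on $\mathbb{R}^N$ and $\mathbb{R}^M$, and let $X\subset\mathbb{R}^N$, $Y\subset\mathbb{R}^M$ be convex sets; consider the saddle-point problem $\min_{x\in X}\max_{y\in Y} f(x)+y^TAx-g(y)$. Let $\chi_C$ denote the characteristic function of a set $C$ ($0$ on $C$, $+\infty$ off $C$), and let $F=\partial(f+\chi_X)$, $G=\partial(g+\chi_Y)$. It is assumed that the problem is feasible (there is $u^\star=(x^\star,y^\star)$ with $0\in F(x^\star)+A^Ty^\star$, $0\in G(y^\star)-Ax^\star$) and that the minimizations below have solutions. The PDHG method with stepsizes $\tau_k,\sigma_k>0$ starts from $x_0,y_0$ and iterates $x_{k+1}=\arg\min_{x\in X} f(x)+\frac{1}{2\tau_k}\|x-(x_k-\tau_kA^Ty_k)\|^2$, $y_{k+1}=\arg\min_{y\in Y} g(y)+\frac{1}{2\sigma_k}\|y-(y_k+\sigma_kA(2x_{k+1}-x_k))\|^2$. (One has $P_{k+1}\in F(x_{k+1})+A^Ty_{k+1}$ and $D_{k+1}\in G(y_{k+1})-Ax_{k+1}$.)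 Write $u_k=(x_k,y_k)$, $M_k=\begin{pmatrix}\tau_k^{-1}I & -A^T\\ -A & \sigma_k^{-1}I\end{pmatrix}$, $H_k=\begin{pmatrix}\tau_k^{-1}I & 0\\ 0 & \sigma_k^{-1}I\end{pmatrix}$, and for a symmetric (possibly indefinite) matrix $M$, $\|u\|_M^2:=u^TMu$. Let $\phi_k=\max\{(\tau_k-\tau_{k+1})/\tau_k,\ (\sigma_k-\sigma_{k+1})/\sigma_k,\ 0\}$. Conditions: (A) the sequences $\{\tau_k\}$ and $\{\sigma_k\}$ are bounded; (B) $\sum_{k\ge0}\phi_k<C_\phi<\infty$ for some constant $C_\phi$; (C1) there is a constant $L$ with $\tau_k\sigma_k<L<\rho(A^TA)^{-1}$ for all $k>0$ ($\rho$ = spectral radius); (C2) either $X$ or $Y$ is bounded and there is $c\in(0,1)$ with $\|u_{k+1}-u_k\|_{M_k}^2\ge c\|u_{k+1}-u_k\|_{H_k}^2$ for all $k>0$. *)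

From HB Require Import structures.
From mathcomp Require Import all_boot all_order all_algebra.
From mathcomp Require Import all_classical all_reals all_analysis.
Set Implicit Arguments. Unset Strict Implicit. Unset Printing Implicit Defensive.
Import Order.TTheory GRing.Theory Num.Theory.
Local Open Scope ring_scope.
Local Open Scope classical_set_scope.

Definition sqnorm (R : realType) n (v : 'cV[R]_n) : R := (v^T *m v) 0 0.

(** Quadratic form u^T M u for a symmetric (possibly indefinite) M. *)
Definition qnorm (R : realType) n (Mx : 'M[R]_n) (u : 'cV[R]_n) : R :=
  (u^T *m Mx *m u) 0 0.

Definition convex_fun (R : realType) n (f : 'cV[R]_n -> R) : Prop :=
  forall x y (t : R), 0 <= t <= 1 ->
    f (t *: x + (1 - t) *: y) <= t * f x + (1 - t) * f y.

(** v \in \partial (f + \chi_X)(x), unfolded. *)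
Definition subgrad (R : realType) n (f : 'cV[R]_n -> R) (X : set 'cV[R]_n)
    (x v : 'cV[R]_n) : Prop :=
  X x /\ forall z, X z -> f x + (v^T *m (z - x)) 0 0 <= f z.

(** Spectral radius of A^T A (symmetric, so all its eigenvalues are real). *)
Definition rhoAtA (R : realType) m n (A : 'M[R]_(m, n)) : R :=
  sup [set `|a| | a in [set a : R | eigenvalue (A^T *m A) a]].

Definition Mmat (R : realType) m n (A : 'M[R]_(m, n)) (tau sigma : R)
  : 'M[R]_(n + m) :=
  block_mx (tau^-1 %:M) (- A^T) (- A) (sigma^-1 %:M).

Definition Hmat (R : realType) (n m : nat) (tau sigma : R) : 'M[R]_(n + m) :=
  block_mx (tau^-1 %:M) 0 0 (sigma^-1 %:M).

Definition phi (R : realType) (tau sigma : nat -> R) (k : nat) : R :=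
  Num.max ((tau k - tau k.+1) / tau k)
          (Num.max ((sigma k - sigma k.+1) / sigma k) 0).

Definition pdhg_iter (R : realType) m n (A : 'M[R]_(m, n))
    (f : 'cV[R]_n -> R) (g : 'cV[R]_m -> R)
    (X : set 'cV[R]_n) (Y : set 'cV[R]_m) (tau sigma : nat -> R)
    (x : nat -> 'cV[R]_n) (y : nat -> 'cV[R]_m) : Prop :=
  forall k,
    (X (x k.+1) /\ forall z, X z ->
       f (x k.+1) + (2 * tau k)^-1 * sqnorm (x k.+1 - (x k - tau k *: (A^T *m y k)))
       <= f z + (2 * tau k)^-1 * sqnorm (z - (x k - tau k *: (A^T *m y k)))) /\
    (Y (y k.+1) /\ forall z, Y z ->
       g (y k.+1) + (2 * sigma k)^-1 *
          sqnorm (y k.+1 - (y k + sigma k *: (A *m (2 *: x k.+1 - x k))))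
       <= g z + (2 * sigma k)^-1 *
          sqnorm (z - (y k + sigma k *: (A *m (2 *: x k.+1 - x k))))).

(** Residuals P_{k+1}, D_{k+1}. *)
Definition Pres (R : realType) m n (A : 'M[R]_(m, n)) (tau : nat -> R)
    (x : nat -> 'cV[R]_n) (y : nat -> 'cV[R]_m) (k : nat) : 'cV[R]_n :=
  (tau k)^-1 *: (x k - x k.+1) - A^T *m (y k - y k.+1).

Definition Dres (R : realType) m n (A : 'M[R]_(m, n)) (sigma : nat -> R)
    (x : nat -> 'cV[R]_n) (y : nat -> 'cV[R]_m) (k : nat) : 'cV[R]_m :=
  (sigma k)^-1 *: (y k - y k.+1) - A *m (x k - x k.+1).

(* The iterates are Fejer-monotone in the varying metric M_k: the variational
   inequalities of the two proximal steps, combined with the saddle-point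
   conditions, give
     ||u_{k+1} - u*||^2_{M_k} + ||u_k - u_{k+1}||^2_{M_k} <= ||u_k - u*||^2_{M_k}.
   Passing from M_k to M_{k+1} costs a factor 1 + O(phi_k), summable by (B).
   Under (C1), via ||A x||^2 <= rho(A^T A) ||x||^2, and under (C2), via the
   boundedness of X or Y, M_k dominates H_k up to constants, so the energy is
   bounded below and the increments ||u_k - u_{k+1}||^2_{H_k} are summable.
   Finally the stepsizes are bounded above by (A) and eventually bounded away
   from 0 by (B), so the residuals are dominated by these increments. *)

From HB Require Import structures.
From mathcomp Require Import all_boot all_order all_algebra.
From mathcomp Require Import all_classical all_reals all_analysis.
From mathcomp Require Import ring lra.
Set Implicit Arguments. Unset Strict Implicit. Unset Printing Implicit Defensive.
Import Order.TTheory GRing.Theory Num.Theory numFieldNormedType.Exports.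
Local Open Scope ring_scope.
Local Open Scope classical_set_scope.

Section InnerProduct.
Variable R : realType.

Definition dot n (u v : 'cV[R]_n) : R := (u^T *m v) 0 0.

Lemma dotE n (u v : 'cV[R]_n) : dot u v = \sum_i u i 0 * v i 0.
Proof. by rewrite /dot mxE; apply: eq_bigr => i _; rewrite mxE. Qed.

Lemma sqnorm_dot n (u : 'cV[R]_n) : sqnorm u = dot u u.
Proof. by []. Qed.

Lemma dotC n (u v : 'cV[R]_n) : dot u v = dot v u.
Proof. by rewrite !dotE; apply: eq_bigr => i _; rewrite mulrC. Qed.

Lemma dotDl n (u w v : 'cV[R]_n) : dot (u + w) v = dot u v + dot w v.
Proof. by rewrite /dot linearD mulmxDl mxE. Qed.

Lemma dotZl n a (u v : 'cV[R]_n) : dot (a *: u) v = a * dot u v.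
Proof. by rewrite /dot linearZ -scalemxAl mxE. Qed.

Lemma dotNl n (u v : 'cV[R]_n) : dot (- u) v = - dot u v.
Proof. by rewrite -scaleN1r dotZl mulN1r. Qed.

Lemma dotBl n (u w v : 'cV[R]_n) : dot (u - w) v = dot u v - dot w v.
Proof. by rewrite dotDl dotNl. Qed.

Lemma dotDr n (u w v : 'cV[R]_n) : dot v (u + w) = dot v u + dot v w.
Proof. by rewrite dotC dotDl !(dotC v). Qed.

Lemma dotZr n a (u v : 'cV[R]_n) : dot v (a *: u) = a * dot v u.
Proof. by rewrite dotC dotZl dotC. Qed.

Lemma dotNr n (u v : 'cV[R]_n) : dot v (- u) = - dot v u.
Proof. by rewrite dotC dotNl dotC. Qed.

Lemma dotBr n (u w v : 'cV[R]_n) : dot v (u - w) = dot v u - dot v w.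
Proof. by rewrite dotDr dotNr. Qed.

Lemma dot0r n (u : 'cV[R]_n) : dot u 0 = 0.
Proof. by rewrite /dot mulmx0 mxE. Qed.

Lemma dot_mulmxE m n (u : 'cV[R]_m) (B : 'M[R]_(m, n)) (v : 'cV[R]_n) :
  (u^T *m B *m v) 0 0 = dot u (B *m v).
Proof. by rewrite /dot mulmxA. Qed.

Lemma dot_trmxl m n (B : 'M[R]_(m, n)) (u : 'cV[R]_m) (v : 'cV[R]_n) :
  dot (B^T *m u) v = dot u (B *m v).
Proof. by rewrite /dot trmx_mul trmxK mulmxA. Qed.

Lemma dot_trmxr m n (B : 'M[R]_(m, n)) (u : 'cV[R]_m) (v : 'cV[R]_n) :
  dot v (B^T *m u) = dot (B *m v) u.
Proof. by rewrite dotC dot_trmxl dotC. Qed.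

Lemma sqnorm_ge0 n (u : 'cV[R]_n) : 0 <= sqnorm u.
Proof. by rewrite sqnorm_dot dotE sumr_ge0 // => i _; rewrite -expr2 sqr_ge0. Qed.

Lemma sqnorm_eq0 n (u : 'cV[R]_n) : sqnorm u = 0 -> u = 0.
Proof.
rewrite sqnorm_dot dotE => /psumr_eq0P u0; apply/matrixP => i j.
rewrite (ord1 j) mxE; apply/eqP; rewrite -sqrf_eq0 expr2.
by apply/eqP/u0 => // k _; rewrite -expr2 sqr_ge0.
Qed.

Lemma sqnorm0 n : sqnorm (0 : 'cV[R]_n) = 0.
Proof. exact: dot0r. Qed.

Lemma sqnormD n (u v : 'cV[R]_n) :
  sqnorm (u + v) = sqnorm u + 2 * dot u v + sqnorm v.
Proof. by rewrite !sqnorm_dot dotDl !dotDr (dotC v u); ring. Qed.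

Lemma sqnormB n (u v : 'cV[R]_n) :
  sqnorm (u - v) = sqnorm u - 2 * dot u v + sqnorm v.
Proof. by rewrite !sqnorm_dot dotBl !dotBr (dotC v u); ring. Qed.

Lemma sqnormZ n a (u : 'cV[R]_n) : sqnorm (a *: u) = a ^+ 2 * sqnorm u.
Proof. by rewrite !sqnorm_dot dotZl dotZr mulrA expr2. Qed.

Lemma sqnormN n (u : 'cV[R]_n) : sqnorm (- u) = sqnorm u.
Proof. by rewrite !sqnorm_dot dotNl dotNr opprK. Qed.

Lemma sqnormD_le n (u v : 'cV[R]_n) :
  sqnorm (u + v) <= 2 * sqnorm u + 2 * sqnorm v.
Proof. by have := sqnorm_ge0 (u - v); rewrite sqnormB sqnormD; lra. Qed.

Lemma young_dot n (u v : 'cV[R]_n) w : 0 < w ->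
  2 * dot u v <= w * sqnorm u + w^-1 * sqnorm v.
Proof.
move=> w_gt0; have := sqnorm_ge0 (w *: u - v).
rewrite sqnormB sqnormZ dotZl => sq_ge0; rewrite -subr_ge0.
suff -> : w * sqnorm u + w^-1 * sqnorm v - 2 * dot u v =
  w^-1 * (w ^+ 2 * sqnorm u - 2 * (w * dot u v) + sqnorm v).
  by rewrite mulr_ge0 // invr_ge0 ltW.
by field; rewrite gt_eqF.
Qed.

Lemma quadratic_ge0_discr (p q r : R) :
  0 <= r -> (forall t, 0 <= p + 2 * t * q + t ^+ 2 * r) -> q ^+ 2 <= p * r.
Proof.
move=> r_ge0 quad_ge0; have [r_gt0|] := ltP 0 r.
  have := quad_ge0 (- q / r).
  have -> : p + 2 * (- q / r) * q + (- q / r) ^+ 2 * r = (p * r - q ^+ 2) / r.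
    by field; rewrite gt_eqF.
  by rewrite pmulr_lge0 ?invr_gt0 // subr_ge0.
move=> r_le0; have r0 : r = 0 by lra.
have [->|q_neq0] := eqVneq q 0; first by rewrite expr0n r0 mulr0.
have := quad_ge0 (- (p + 1) / (2 * q)).
have -> : 2 * (- (p + 1) / (2 * q)) * q = - (p + 1) by field.
by rewrite r0 mulr0 addr0; lra.
Qed.

Lemma cauchy_schwarz_dot n (u v : 'cV[R]_n) : dot u v ^+ 2 <= sqnorm u * sqnorm v.
Proof.
apply: quadratic_ge0_discr; first exact: sqnorm_ge0.
move=> t; have := sqnorm_ge0 (u + t *: v).
by rewrite sqnormD sqnormZ dotZr; congr (_ <= _); ring.
Qed.

End InnerProduct.

Section Prox.
Variable R : realType.

Lemma ge0_of_affine_ge0 (a b : R) :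
  (forall s, 0 < s <= 1 -> 0 <= a + s * b) -> 0 <= a.
Proof.
move=> affine_ge0; rewrite leNgt; apply/negP => a_lt0.
have b_ge0 := normr_ge0 b.
have d_gt0 : 0 < 2 * (`|b| - a) by rewrite mulr_gt0 //; lra.
pose s := - a / (2 * (`|b| - a)).
have sE : s * (2 * (`|b| - a)) = - a by rewrite divfK ?gt_eqF.
have s_gt0 : 0 < s by rewrite divr_gt0 // oppr_gt0.
have s_le1 : s <= 1 by rewrite ler_pdivrMr //; lra.
have := affine_ge0 s; rewrite s_gt0 s_le1 => /(_ isT).
have : s * b <= s * `|b| by apply: ler_wpM2l; [exact: ltW | exact: ler_norm].
have sa_lt0 : s * a < 0 by rewrite pmulr_rlt0.
have : 2 * (s * `|b|) = - a + 2 * (s * a) by rewrite -sE; ring.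
lra.
Qed.

(* Move from [xp] towards [z] and let the step length go to zero. *)
Lemma prox_variational_ineq n (f : 'cV[R]_n -> R) (X : set 'cV[R]_n)
    (c xp : 'cV[R]_n) (t : R) :
  convex_fun f -> convex_set X -> 0 < t -> X xp ->
  (forall z, X z ->
     f xp + (2 * t)^-1 * sqnorm (xp - c) <= f z + (2 * t)^-1 * sqnorm (z - c)) ->
  forall z, X z -> dot (t^-1 *: (c - xp)) (z - xp) <= f z - f xp.
Proof.
move=> f_cvx X_cvx t_gt0 Xxp xp_min z Xz.
rewrite dotZl -opprB dotNl mulrN.
suff : 0 <= f z - f xp + t^-1 * dot (xp - c) (z - xp) by lra.
apply: (@ge0_of_affine_ge0 _ ((2 * t)^-1 * sqnorm (z - xp))) => s /andP[s_gt0 s_le1].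
have s01 : 0 <= s <= 1 by rewrite ltW.
have Xzs : X (s *: z + (1 - s) *: xp).
  by have := X_cvx z xp (Itv01 (ltW s_gt0) s_le1); rewrite !inE; apply.
have := xp_min _ Xzs.
have -> : s *: z + (1 - s) *: xp - c = (xp - c) + s *: (z - xp).
  by apply/matrixP => i j; rewrite !mxE; ring.
rewrite (sqnormD (xp - c)) sqnormZ dotZr.
have := f_cvx z xp s s01.
set F := f _; set D := dot _ _; set S := sqnorm (z - xp); set E := sqnorm (xp - c).
move=> f_conv opt.
suff : 0 <= s * (f z - f xp + t^-1 * D + s * ((2 * t)^-1 * S)) by rewrite pmulr_rge0.
have -> : s * (f z - f xp + t^-1 * D + s * ((2 * t)^-1 * S)) =
  s * (f z - f xp) + (2 * t)^-1 * (2 * s * D + s ^+ 2 * S).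
  by field; rewrite gt_eqF.
have : (2 * t)^-1 * (E + 2 * (s * D) + s ^+ 2 * S) =
  (2 * t)^-1 * E + (2 * t)^-1 * (2 * s * D + s ^+ 2 * S) by ring.
lra.
Qed.

End Prox.

Section SpectralBound.
Variable R : realType.

Definition frob m n (B : 'M[R]_(m, n)) : R := \sum_i sqnorm (row i B)^T.

Lemma frob_ge0 m n (B : 'M[R]_(m, n)) : 0 <= frob B.
Proof. by apply: sumr_ge0 => i _; apply: sqnorm_ge0. Qed.

Lemma sqnorm_mulmx_le_frob m n (B : 'M[R]_(m, n)) (a : 'cV[R]_n) :
  sqnorm (B *m a) <= frob B * sqnorm a.
Proof.
rewrite [X in X <= _]sqnorm_dot dotE /frob mulr_suml; apply: ler_sum => i _.
have -> : (B *m a) i 0 = dot (row i B)^T a.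
  by rewrite mxE dotE; apply: eq_bigr => j _; rewrite !mxE.
by rewrite -expr2 cauchy_schwarz_dot.
Qed.

Lemma psd_cauchy_schwarz n (B : 'M[R]_n) (b c : 'cV[R]_n) :
  B^T = B -> (forall u, 0 <= dot u (B *m u)) ->
  dot b (B *m c) ^+ 2 <= dot b (B *m b) * dot c (B *m c).
Proof.
move=> BT psd; apply: quadratic_ge0_discr; first exact: psd.
move=> t; have := psd (b + t *: c).
rewrite mulmxDr dotDl !dotDr -!scalemxAr !dotZr !dotZl.
have -> : dot c (B *m b) = dot b (B *m c) by rewrite -{1}BT dot_trmxr dotC.
by congr (_ <= _); ring.
Qed.

(* With [c := B^-1 b], Cauchy-Schwarz for the form [B] gives
   [|b|^4 = <b, B c>^2 <= <b, B b> <c, b>], and [<c, b>^2 <= frob(B^-1) |b|^4]. *)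
Lemma psd_unitmx_sqnorm_le n (B : 'M[R]_n) (b : 'cV[R]_n) :
  B^T = B -> (forall u, 0 <= dot u (B *m u)) -> B \in unitmx ->
  sqnorm b ^+ 2 <= frob (invmx B) * dot b (B *m b) ^+ 2.
Proof.
move=> BT psd B_unit; set c := invmx B *m b.
have Bc : B *m c = b by rewrite /c mulmxA mulmxV // mul1mx.
have := psd_cauchy_schwarz b c BT psd; rewrite Bc -sqnorm_dot.
have := psd c; rewrite Bc.
have := le_trans (cauchy_schwarz_dot c b)
  (ler_wpM2r (sqnorm_ge0 b) (sqnorm_mulmx_le_frob (invmx B) b)).
set s := sqnorm b; set P := dot b _; set d := dot c b; set F := frob _.
move=> d2_le d_ge0 s2_le.
have P_ge0 : 0 <= P by apply: psd.
have s4_le : s ^+ 2 * s ^+ 2 <= s ^+ 2 * (F * P ^+ 2).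
  have Pd_ge : (s ^+ 2) ^+ 2 <= (P * d) ^+ 2.
    by apply: lerXn2r; rewrite // nnegrE ?sqr_ge0 ?mulr_ge0.
  have d2_le' : P ^+ 2 * d ^+ 2 <= P ^+ 2 * (F * s ^+ 2).
    by apply: ler_wpM2l; rewrite ?sqr_ge0 // expr2 mulrA.
  have -> : s ^+ 2 * (F * P ^+ 2) = P ^+ 2 * (F * s ^+ 2) by ring.
  by rewrite -expr2; apply: le_trans Pd_ge _; rewrite exprMn.
have [s0|s_neq0] := eqVneq s 0; first by rewrite s0 expr0n mulr_ge0 ?frob_ge0 ?sqr_ge0.
by rewrite -(ler_pM2l (_ : 0 < s ^+ 2)) // exprn_gt0 // lt_def s_neq0 sqnorm_ge0.
Qed.

Section Rayleigh.
Variables (m n : nat) (A : 'M[R]_(m, n)).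

Definition rayleigh_quotients : set R :=
  [set sqnorm (A *m b) / sqnorm b | b in [set b | 0 < sqnorm b]].

Definition rayleigh_max : R := sup rayleigh_quotients.

Lemma has_sup_rayleigh_quotients (b : 'cV[R]_n) :
  0 < sqnorm b -> has_sup rayleigh_quotients.
Proof.
move=> b_gt0; split; first by exists (sqnorm (A *m b) / sqnorm b), b.
exists (frob A) => _ [a a_gt0 <-].
by rewrite ler_pdivrMr // sqnorm_mulmx_le_frob.
Qed.

Lemma sqnorm_mulmx_le_rayleigh (b : 'cV[R]_n) :
  sqnorm (A *m b) <= rayleigh_max * sqnorm b.
Proof.
have [b0|b_neq0] := eqVneq (sqnorm b) 0.
  by rewrite b0 (sqnorm_eq0 b0) mulmx0 sqnorm0 mulr0.
have b_gt0 : 0 < sqnorm b by rewrite lt_def b_neq0 sqnorm_ge0.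
rewrite -ler_pdivrMr //; apply: sup_upper_bound; last by exists b.
exact: has_sup_rayleigh_quotients b_gt0.
Qed.

Lemma rayleigh_max_ge0 : 0 <= rayleigh_max.
Proof.
have [[b b_gt0]|] := pselect (exists b : 'cV[R]_n, 0 < sqnorm b).
  apply: le_trans (_ : sqnorm (A *m b) / sqnorm b <= _).
    by rewrite divr_ge0 ?sqnorm_ge0.
  by apply: sup_upper_bound; [exact: has_sup_rayleigh_quotients b_gt0 | exists b].
move=> /forallNP no_b; rewrite /rayleigh_max.
suff -> : rayleigh_quotients = set0 by rewrite sup0.
by apply/seteqP; split => // r [b /no_b].
Qed.

Lemma psd_rayleigh_shift (u : 'cV[R]_n) :
  0 <= dot u ((rayleigh_max%:M - A^T *m A) *m u).
Proof.
rewrite mulmxBl dotBr mul_scalar_mx dotZr -mulmxA dot_trmxr -!sqnorm_dot.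
by rewrite subr_ge0 sqnorm_mulmx_le_rayleigh.
Qed.

(* If [l I - A^T A] were invertible, [psd_unitmx_sqnorm_le] would keep every
   Rayleigh quotient a fixed distance below their supremum [l]. *)
Lemma rayleigh_max_eigenvalue (b : 'cV[R]_n) :
  0 < sqnorm b -> eigenvalue (A^T *m A) rayleigh_max.
Proof.
move=> b_gt0; set l := rayleigh_max; set B := l%:M - A^T *m A.
have BT : B^T = B by rewrite /B linearB /= tr_scalar_mx trmx_mul trmxK.
suff /det0P [v v_neq0 vB] : \det B == 0.
  apply/eigenvalueP; exists v => //; move: vB.
  by rewrite mulmxBr mul_mx_scalar => /eqP; rewrite subr_eq0 => /eqP.
apply: contraT => detB_neq0.
have B_unit : B \in unitmx by rewrite unitmxE unitfE.
set F := frob (invmx B); have F_ge0 : 0 <= F by apply: frob_ge0.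
set e := (F + 1)^-1.
have e_gt0 : 0 < e by rewrite invr_gt0; lra.
have eF : e * (F + 1) = 1 by rewrite mulVf // gt_eqF //; lra.
have [_ [a a_gt0 <-] near_l] := sup_adherent e_gt0 (has_sup_rayleigh_quotients b_gt0).
set r := l - sqnorm (A *m a) / sqnorm a.
have r_ge0 : 0 <= r by rewrite /r subr_ge0 ler_pdivrMr // sqnorm_mulmx_le_rayleigh.
have r_lt : r < e by move: near_l; rewrite /r -/rayleigh_max -/l; lra.
have one_le : 1 <= F * r ^+ 2.
  have := psd_unitmx_sqnorm_le a BT psd_rayleigh_shift B_unit.
  have -> : dot a (B *m a) = sqnorm a * r.
    rewrite mulmxBl dotBr mul_scalar_mx dotZr -mulmxA dot_trmxr -!sqnorm_dot.
    by rewrite /r; field; rewrite gt_eqF.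
  have -> : F * (sqnorm a * r) ^+ 2 = sqnorm a ^+ 2 * (F * r ^+ 2) by ring.
  by rewrite -[X in X <= _ -> _]mulr1 ler_pM2l ?exprn_gt0.
have : F * r ^+ 2 <= F * e ^+ 2.
  by apply: ler_wpM2l => //; rewrite !expr2 ler_pM // ltW.
nra.
Qed.

Lemma eigenvalue_AtA_le_rayleigh e :
  eigenvalue (A^T *m A) e -> 0 <= e <= rayleigh_max.
Proof.
move=> /eigenvalueP [v vS v_neq0].
have uS : (A^T *m A) *m v^T = e *: v^T.
  by rewrite -{1}[A^T *m A]trmxK trmx_mul trmxK -trmx_mul vS linearZ.
have u_gt0 : 0 < sqnorm v^T.
  rewrite lt_def sqnorm_ge0 andbT; apply/negP => /eqP /sqnorm_eq0 v0.
  by move: v_neq0; rewrite -[v]trmxK v0 linear0 eqxx.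
have Au : sqnorm (A *m v^T) = e * sqnorm v^T.
  by rewrite sqnorm_dot -dot_trmxr mulmxA uS dotZr.
apply/andP; split.
  by rewrite -(pmulr_lge0 _ u_gt0) -Au sqnorm_ge0.
by rewrite -(ler_pM2r u_gt0) -Au sqnorm_mulmx_le_rayleigh.
Qed.

End Rayleigh.

Lemma sqnorm_mulmx_le_rhoAtA m n (A : 'M[R]_(m, n)) (a : 'cV[R]_n) :
  sqnorm (A *m a) <= rhoAtA A * sqnorm a.
Proof.
have [a0|a_neq0] := eqVneq (sqnorm a) 0.
  by rewrite a0 (sqnorm_eq0 a0) mulmx0 sqnorm0 mulr0.
have a_gt0 : 0 < sqnorm a by rewrite lt_def a_neq0 sqnorm_ge0.
apply: le_trans (sqnorm_mulmx_le_rayleigh A a) _.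
rewrite ler_wpM2r ?sqnorm_ge0 //.
set E := [set `|e| | e in [set e | eigenvalue (A^T *m A) e]].
have l_in : E `|rayleigh_max A|.
  by exists (rayleigh_max A); first exact: rayleigh_max_eigenvalue a_gt0.
have hasE : has_sup E.
  split; first by exists `|rayleigh_max A|.
  exists (rayleigh_max A) => _ [e /eigenvalue_AtA_le_rayleigh /andP[e_ge0 e_le] <-].
  by rewrite ger0_norm.
by have := sup_upper_bound hasE l_in; rewrite ger0_norm ?rayleigh_max_ge0.
Qed.

End SpectralBound.

Section StepSizeChange.
Variable R : realType.

Lemma invr_step_le (t t' p : R) : 0 < t -> 0 < t' -> (t - t') / t <= p ->
  t'^-1 <= t^-1 + p * t'^-1.
Proof.
move=> t_gt0 t'_gt0 drop_le; rewrite -lerBlDl.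
have -> : t'^-1 - t^-1 = (t - t') / t * t'^-1 by field; rewrite !gt_eqF.
by apply: ler_wpM2r; rewrite // invr_ge0 ltW.
Qed.

Lemma invr_step_le2 (t t' p : R) : 0 < t -> 0 < t' -> (t - t') / t <= p ->
  p <= 2^-1 -> t'^-1 <= 2 * t^-1.
Proof.
move=> t_gt0 t'_gt0 drop_le p_le; have := invr_step_le t_gt0 t'_gt0 drop_le.
have : p * t'^-1 <= 2^-1 * t'^-1 by apply: ler_wpM2r; rewrite // invr_ge0 ltW.
lra.
Qed.

End StepSizeChange.

Section QuadraticForms.
Variables (R : realType) (m n : nat) (A : 'M[R]_(m, n)).
Implicit Types (t s : R) (a : 'cV[R]_n) (b : 'cV[R]_m).

Definition Qform t s a b : R :=
  t^-1 * sqnorm a + s^-1 * sqnorm b - 2 * dot (A *m a) b.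

Definition Hform t s a b : R := t^-1 * sqnorm a + s^-1 * sqnorm b.

Lemma qnorm_Mmat t s a b : qnorm (Mmat A t s) (col_mx a b) = Qform t s a b.
Proof.
rewrite /qnorm /Mmat tr_col_mx mul_row_block mul_row_col !mulmxDl.
rewrite mxE [X in X + _]mxE [X in _ + X]mxE !dot_mulmxE.
rewrite !mul_scalar_mx !mulNmx !dotZr !dotNr dot_trmxr dotC -!sqnorm_dot /Qform.
ring.
Qed.

Lemma qnorm_Hmat t s a b : qnorm (Hmat n m t s) (col_mx a b) = Hform t s a b.
Proof.
rewrite /qnorm /Hmat tr_col_mx mul_row_block mul_row_col !mulmxDl.
rewrite mxE [X in X + _]mxE [X in _ + X]mxE !dot_mulmxE.
by rewrite !mul_scalar_mx !mul0mx !dotZr !dot0r -!sqnorm_dot /Hform; ring.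
Qed.

Lemma Hform_ge0 t s a b : 0 < t -> 0 < s -> 0 <= Hform t s a b.
Proof.
by move=> t_gt0 s_gt0; rewrite addr_ge0 // mulr_ge0 ?sqnorm_ge0 // invr_ge0 ltW.
Qed.

Lemma QformN t s a b : Qform t s (- a) (- b) = Qform t s a b.
Proof. by rewrite /Qform !sqnormN mulmxN dotNl dotNr opprK. Qed.

Lemma HformN t s a b : Hform t s (- a) (- b) = Hform t s a b.
Proof. by rewrite /Hform !sqnormN. Qed.

Lemma QformD t s a b da db :
  Qform t s (a + da) (b + db) = Qform t s a b + Qform t s da db +
    2 * (dot (t^-1 *: da - A^T *m db) a + dot (s^-1 *: db - A *m da) b).
Proof.
rewrite /Qform !sqnormD mulmxDr !dotDl !dotDr !dotNl !dotZl dot_trmxl.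
by rewrite (dotC da) (dotC db b) (dotC db); ring.
Qed.

Lemma Hform_le_Qform t s a b : 0 < t -> 0 < s ->
  Hform t s a b <= 2 * Qform t s a b + 4 * s * sqnorm (A *m a).
Proof.
move=> t_gt0 s_gt0; have := young_dot (A *m a) b (mulr_gt0 (ltr0Sn _ 1) s_gt0).
have -> : (2 * s)^-1 = s^-1 / 2 by rewrite invfM mulrC.
have : 0 <= t^-1 * sqnorm a by rewrite mulr_ge0 ?sqnorm_ge0 // invr_ge0 ltW.
rewrite /Hform /Qform.
have -> : s^-1 / 2 * sqnorm b = s^-1 * sqnorm b / 2 by rewrite mulrAC.
lra.
Qed.

(* Young's inequality with weight [s / T], [T = (1 + rL) / 2], splits the
   coupling term between the two diagonal blocks. *)
Lemma Hform_le_Qform_small_step t s a b L r :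
  0 < t -> 0 < s -> t * s <= L -> 0 <= r -> r * L < 1 ->
  sqnorm (A *m a) <= r * sqnorm a ->
  (1 - r * L) / 2 * Hform t s a b <= Qform t s a b.
Proof.
move=> t_gt0 s_gt0 tsL r_ge0 rL_lt1 Aa_le.
have L_gt0 : 0 < L by apply: lt_le_trans tsL; rewrite mulr_gt0.
set th := r * L in rL_lt1 *.
have th_ge0 : 0 <= th by rewrite mulr_ge0 // ltW.
set T := (1 + th) / 2.
have T_gt0 : 0 < T by rewrite divr_gt0 //; lra.
have := young_dot (A *m a) b (divr_gt0 s_gt0 T_gt0).
have -> : (s / T)^-1 = T / s by rewrite invf_div.
set X := sqnorm a; set Y := sqnorm b; set D := dot _ _.
have X_ge0 : 0 <= X by apply: sqnorm_ge0.
have tX_ge0 : 0 <= t^-1 * X by rewrite mulr_ge0 // invr_ge0 ltW.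
have Aa_bound : s / T * sqnorm (A *m a) <= th / T * (t^-1 * X).
  have sr : s * r <= th / t.
    rewrite ler_pdivlMr //; have -> : s * r * t = r * (t * s) by ring.
    by apply: ler_wpM2l.
  apply: le_trans (_ : s / T * (r * X) <= _).
    by apply: ler_wpM2l; rewrite // divr_ge0 // ltW.
  have -> : s / T * (r * X) = s * r * (T^-1 * X) by ring.
  have -> : th / T * (t^-1 * X) = th / t * (T^-1 * X) by ring.
  by apply: ler_wpM2r; rewrite // mulr_ge0 // invr_ge0 ltW.
have coeff_ge0 : 0 <= 1 - th / T - (1 - th) / 2.
  have -> : 1 - th / T - (1 - th) / 2 = (1 - th) ^+ 2 / (2 * (1 + th)).
    by rewrite /T; field; rewrite gt_eqF //; lra.
  by rewrite divr_ge0 ?sqr_ge0 // mulr_ge0 //; lra.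
have := mulr_ge0 coeff_ge0 tX_ge0; rewrite /Hform /Qform -/X -/Y -/D.
have -> : T / s * Y = (1 + th) / 2 * (s^-1 * Y) by rewrite mulrA.
lra.
Qed.

Lemma Qform_step_le t s t' s' p a b :
  0 < t -> 0 < s -> 0 < t' -> 0 < s' ->
  (t - t') / t <= p -> (s - s') / s <= p ->
  Qform t' s' a b <= Qform t s a b + p * Hform t' s' a b.
Proof.
move=> t_gt0 s_gt0 t'_gt0 s'_gt0 t_drop s_drop.
have := ler_wpM2r (sqnorm_ge0 a) (invr_step_le t_gt0 t'_gt0 t_drop).
have := ler_wpM2r (sqnorm_ge0 b) (invr_step_le s_gt0 s'_gt0 s_drop).
by rewrite /Qform /Hform; lra.
Qed.

Lemma Hform_step_le2 t s t' s' p a b :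
  0 < t -> 0 < s -> 0 < t' -> 0 < s' ->
  (t - t') / t <= p -> (s - s') / s <= p -> p <= 2^-1 ->
  Hform t' s' a b <= 2 * Hform t s a b.
Proof.
move=> t_gt0 s_gt0 t'_gt0 s'_gt0 t_drop s_drop p_le.
have := ler_wpM2r (sqnorm_ge0 a) (invr_step_le2 t_gt0 t'_gt0 t_drop p_le).
have := ler_wpM2r (sqnorm_ge0 b) (invr_step_le2 s_gt0 s'_gt0 s_drop p_le).
by rewrite /Hform; lra.
Qed.

End QuadraticForms.

Lemma Qform_trmx (R : realType) m n (A : 'M[R]_(m, n)) t s a b :
  Qform A^T s t b a = Qform A t s a b.
Proof. by rewrite /Qform dot_trmxl dotC; ring. Qed.

Lemma Hform_sym (R : realType) m n t s (a : 'cV[R]_n) (b : 'cV[R]_m) :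
  Hform s t b a = Hform t s a b.
Proof. by rewrite /Hform addrC. Qed.

Section Residuals.
Variable R : realType.

Lemma sqnorm_scaled_sub_le m n (B : 'M[R]_(m, n)) (t s lo Bd : R)
    (a : 'cV[R]_m) (b : 'cV[R]_n) :
  0 < lo -> lo <= t -> 0 < s -> s <= Bd ->
  sqnorm (t^-1 *: a - B *m b) <=
    2 / lo * (t^-1 * sqnorm a) + 2 * frob B * Bd * (s^-1 * sqnorm b).
Proof.
move=> lo_gt0 lo_le_t s_gt0 s_le_Bd; have t_gt0 := lt_le_trans lo_gt0 lo_le_t.
apply: le_trans (sqnormD_le _ _) _; rewrite sqnormZ sqnormN.
apply: lerD.
  rewrite -mulrA ler_pM2l // expr2 -mulrA; apply: ler_wpM2r.
    by rewrite mulr_ge0 ?sqnorm_ge0 // invr_ge0 ltW.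
  by rewrite lef_pV2 ?posrE.
rewrite -!mulrA ler_pM2l //; apply: le_trans (sqnorm_mulmx_le_frob B b) _.
apply: ler_wpM2l; first exact: frob_ge0.
rewrite mulrA; apply: le_trans (_ : s * s^-1 * sqnorm b <= _).
  by rewrite mulfV ?gt_eqF ?mul1r.
by apply: ler_wpM2r; [exact: sqnorm_ge0 | apply: ler_wpM2r; rewrite // invr_ge0 ltW].
Qed.

Lemma residual_le_Hform m n (A : 'M[R]_(m, n)) (t s lo Bd : R)
    (a : 'cV[R]_n) (b : 'cV[R]_m) :
  0 < lo -> lo <= t <= Bd -> lo <= s <= Bd ->
  sqnorm (t^-1 *: a - A^T *m b) + sqnorm (s^-1 *: b - A *m a) <=
    (2 / lo + 2 * (frob A + frob A^T) * Bd) * Hform t s a b.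
Proof.
move=> lo_gt0 /andP[lo_t t_Bd] /andP[lo_s s_Bd].
have t_gt0 := lt_le_trans lo_gt0 lo_t; have s_gt0 := lt_le_trans lo_gt0 lo_s.
have := sqnorm_scaled_sub_le A^T a b lo_gt0 lo_t s_gt0 s_Bd.
have := sqnorm_scaled_sub_le A b a lo_gt0 lo_s t_gt0 t_Bd.
have Bd_ge0 : 0 <= Bd by rewrite (le_trans _ s_Bd) ?ltW.
have tX_ge0 : 0 <= t^-1 * sqnorm a by rewrite mulr_ge0 ?sqnorm_ge0 // invr_ge0 ltW.
have sY_ge0 : 0 <= s^-1 * sqnorm b by rewrite mulr_ge0 ?sqnorm_ge0 // invr_ge0 ltW.
have := mulr_ge0 (mulr_ge0 (frob_ge0 A) Bd_ge0) sY_ge0.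
have := mulr_ge0 (mulr_ge0 (frob_ge0 A^T) Bd_ge0) tX_ge0.
by rewrite /Hform; lra.
Qed.

End Residuals.

Section Series.
Variable R : realType.
Implicit Types u : nat -> R.

Lemma nneg_series_tail_le u : (forall k, 0 <= u k) ->
  (exists C, forall n, \sum_(k < n) u k <= C) ->
  forall e, 0 < e ->
  exists K, forall m n, (K <= m)%N -> \sum_(j < n) u (m + j)%N <= e.
Proof.
move=> u_ge0 [C sum_le] e e_gt0.
pose S := [set \sum_(k < n) u k | n in [set: nat]].
have hasS : has_sup S.
  by split; [exists 0, 0%N; rewrite ?big_ord0 | exists C => _ [n _ <-]].
have [_ [K _ <-] near_sup] := sup_adherent e_gt0 hasS.
exists K => m n /subnKC <-.
have : \sum_(k < K + (m - K) + n) u k <= sup S.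
  by apply: sup_upper_bound => //; exists (K + (m - K) + n)%N.
rewrite !big_split_ord /=.
have : 0 <= \sum_(j < m - K) u (K + j)%N by apply: sumr_ge0.
lra.
Qed.

Lemma nneg_series_cvg0 u : (forall k, 0 <= u k) ->
  (exists C, forall n, \sum_(k < n) u k <= C) -> u @ \oo --> 0.
Proof.
move=> u_ge0 [C sum_le]; apply: cvg_series_cvg_0; apply: nondecreasing_is_cvgn.
  exact: (@nondecreasing_series _ u predT 0%N).
by exists C; apply/ubP => _ [n _ <-]; rewrite seriesEord; exact: sum_le.
Qed.

Lemma perturbed_descent_sum_le (W q phi : nat -> R) (c : R) (K : nat) :
  0 < c -> (forall k, (K <= k)%N -> 0 <= W k) ->
  (forall k, (K <= k)%N -> 0 <= q k) -> (forall k, 0 <= phi k) ->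
  (forall k, (K <= k)%N -> W k.+1 <= (1 + c * phi k) * W k - q k) ->
  (forall n, \sum_(j < n) phi (K + j)%N <= (2 * c)^-1) ->
  forall n, \sum_(j < n) q (K + j)%N <= 2 * W K.
Proof.
move=> c_gt0 W_ge0 q_ge0 phi_ge0 W_step phi_sum n.
have WK_ge0 : 0 <= W K by apply: W_ge0.
have c2_gt0 : 0 < 2 * c by rewrite mulr_gt0.
have growth_le n' : 2 * c * W K * \sum_(j < n') phi (K + j)%N <= W K.
  rewrite mulrAC ler_piMl // -[leRHS](@mulfV _ (2 * c)) ?gt_eqF //.
  by apply: ler_wpM2l; [exact: ltW | exact: phi_sum].
suff inv : W (K + n)%N + \sum_(j < n) q (K + j)%N <=
    W K + 2 * c * W K * \sum_(j < n) phi (K + j)%N.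
  by have := W_ge0 (K + n)%N (leq_addr _ _); have := growth_le n; lra.
elim: n => [|n IH]; first by rewrite !big_ord0 addn0 !mulr0 !addr0.
rewrite !big_ord_recr /= addnS.
have KKn : (K <= K + n)%N by apply: leq_addr.
have := W_step _ KKn; have := q_ge0 _ KKn; have := phi_ge0 (K + n)%N.
have := growth_le n; have := W_ge0 _ KKn.
have : 0 <= \sum_(j < n) q (K + j)%N by apply: sumr_ge0 => j _; apply/q_ge0/leq_addr.
move=> Sq_ge0 w_ge0 growth p_ge0 qn_ge0 step.
have : c * phi (K + n)%N * W (K + n)%N <= c * phi (K + n)%N * (2 * W K).
  by apply: ler_wpM2l; [rewrite mulr_ge0 // ltW | lra].
nra.
Qed.

Lemma ratio_step_lower_bound (t p : nat -> R) (K : nat) : (forall k, 0 < t k) ->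
  (forall k, (t k - t k.+1) / t k <= p k) -> (forall k, 0 <= p k) ->
  (forall n, \sum_(j < n) p (K + j)%N <= 2^-1) ->
  forall n, t K / 2 <= t (K + n)%N.
Proof.
move=> t_gt0 t_drop p_ge0 p_sum n.
suff inv : t K * (1 - \sum_(j < n) p (K + j)%N) <= t (K + n)%N.
  apply: le_trans inv; rewrite ler_pM2l //; have := p_sum n; lra.
elim: n => [|n IH]; first by rewrite big_ord0 subr0 mulr1 addn0.
rewrite big_ord_recr /= addnS.
have step : t (K + n)%N * (1 - p (K + n)%N) <= t (K + n).+1.
  by have := t_drop (K + n)%N; rewrite ler_pdivrMr //; lra.
have S_ge0 : 0 <= \sum_(j < n) p (K + j)%N by apply: sumr_ge0.
have p_le : p (K + n)%N <= 2^-1.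
  by have := p_sum n.+1; rewrite big_ord_recr /=; lra.
have := mulr_ge0 (mulr_ge0 (ltW (t_gt0 K)) S_ge0) (p_ge0 (K + n)%N).
have : t K * (1 - \sum_(j < n) p (K + j)%N) * (1 - p (K + n)%N) <=
    t (K + n)%N * (1 - p (K + n)%N) by apply: ler_wpM2r; lra.
lra.
Qed.

End Series.

Section BoundedSets.
Variable R : realType.

Lemma sqnorm_le_mx_norm n (z : 'cV[R]_n) : sqnorm z <= n%:R * `|z| ^+ 2.
Proof.
have -> : n%:R * `|z| ^+ 2 = \sum_(i < n) `|z| ^+ 2.
  by rewrite sumr_const card_ord mulr_natl.
rewrite sqnorm_dot dotE; apply: ler_sum => i _.
rewrite -expr2 -(real_normK (num_real (z i 0))) lerXn2r ?nnegrE //.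
rewrite [leRHS]/Num.norm /= mx_normrE.
exact: (le_bigmax _ (fun ij : 'I_n * 'I_1 => `|z ij.1 ij.2|) (i, 0)).
Qed.

Lemma bounded_set_sqnorm_le n (X : set 'cV[R]_n) (c : 'cV[R]_n) :
  bounded_set X -> exists b, 0 <= b /\ forall z, X z -> sqnorm (z - c) <= b.
Proof.
rewrite /= /bounded_near => X_bdd; have [r X_le] := filter_ex X_bdd.
set r' := Num.max r 0 + `|c|.
have r'_ge0 : 0 <= r' by rewrite addr_ge0 // le_max lexx orbT.
exists (n%:R * r' ^+ 2); split; first by rewrite mulr_ge0 ?sqr_ge0.
move=> z Xz; apply: le_trans (sqnorm_le_mx_norm _) _.
rewrite ler_wpM2l // lerXn2r ?nnegrE //.
apply: le_trans (ler_normB _ _) _; rewrite lerD2r.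
by apply: le_trans (X_le _ Xz) _; rewrite le_max lexx.
Qed.

End BoundedSets.

Section StepSizeSequences.
Variables (R : realType) (tau sigma : nat -> R).

Lemma phi_ge0 k : 0 <= phi tau sigma k.
Proof. by rewrite /phi !le_max lexx !orbT. Qed.

Lemma tau_drop_le_phi k : (tau k - tau k.+1) / tau k <= phi tau sigma k.
Proof. by rewrite /phi !le_max lexx. Qed.

Lemma sigma_drop_le_phi k : (sigma k - sigma k.+1) / sigma k <= phi tau sigma k.
Proof. by rewrite /phi !le_max lexx !orbT. Qed.

Lemma phi_bounded_sum : (exists C, forall n, \sum_(k < n) phi tau sigma k < C) ->
  exists C, forall n, \sum_(k < n) phi tau sigma k <= C.
Proof. by move=> [C sum_lt]; exists C => n; apply: ltW. Qed.

Lemma stepsizes_eventually_ge : (forall k, 0 < tau k) -> (forall k, 0 < sigma k) ->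
  (exists C, forall n, \sum_(k < n) phi tau sigma k < C) ->
  exists lo K, 0 < lo /\ forall k, (K <= k)%N -> lo <= tau k /\ lo <= sigma k.
Proof.
move=> tau_gt0 sigma_gt0 phi_lt.
have half_gt0 : 0 < 2^-1 :> R by [].
have [K tail_le] := nneg_series_tail_le phi_ge0 (phi_bounded_sum phi_lt) half_gt0.
have tail_K n : \sum_(j < n) phi tau sigma (K + j)%N <= 2^-1 by apply: tail_le.
exists (Num.min (tau K) (sigma K) / 2), K; split.
  by rewrite divr_gt0 // lt_min tau_gt0 sigma_gt0.
move=> k /subnKC <-; split.
- apply: le_trans (ratio_step_lower_bound tau_gt0 tau_drop_le_phi phi_ge0 tail_K _).
  by rewrite ler_pM2r // ge_min lexx.
- apply: le_trans (ratio_step_lower_bound sigma_gt0 sigma_drop_le_phi phi_ge0 tail_K _).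
  by rewrite ler_pM2r // ge_min lexx orbT.
Qed.

End StepSizeSequences.

Section PDHG.
Variables (R : realType) (M N : nat) (A : 'M[R]_(M, N)).
Variables (f : 'cV[R]_N -> R) (g : 'cV[R]_M -> R).
Variables (X : set 'cV[R]_N) (Y : set 'cV[R]_M).
Variables (tau sigma : nat -> R) (x : nat -> 'cV[R]_N) (y : nat -> 'cV[R]_M).
Variables (xs : 'cV[R]_N) (ys : 'cV[R]_M).
Hypotheses (f_cvx : convex_fun f) (g_cvx : convex_fun g).
Hypotheses (X_cvx : convex_set X) (Y_cvx : convex_set Y).
Hypothesis xs_opt : subgrad f X xs (- (A^T *m ys)).
Hypothesis ys_opt : subgrad g Y ys (A *m xs).
Hypotheses (tau_gt0 : forall k, 0 < tau k) (sigma_gt0 : forall k, 0 < sigma k).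
Hypothesis pdhg : pdhg_iter A f g X Y tau sigma x y.

Local Notation Q k := (Qform A (tau k) (sigma k)).
Local Notation H k := (Hform (tau k) (sigma k)).
Local Notation dx k := (x k - x k.+1).
Local Notation dy k := (y k - y k.+1).

Definition pdhg_energy k : R := Q k (x k - xs) (y k - ys).

Lemma pdhg_monotone k :
  0 <= dot (Pres A tau x y k) (x k.+1 - xs) + dot (Dres A sigma x y k) (y k.+1 - ys).
Proof.
have [[Xx x_min] [Yy y_min]] := pdhg k.
have [Xxs xs_sub] := xs_opt; have [Yys ys_sub] := ys_opt.
have vx := prox_variational_ineq f_cvx X_cvx (tau_gt0 k) Xx x_min Xxs.
have vy := prox_variational_ineq g_cvx Y_cvx (sigma_gt0 k) Yy y_min Yys.
have sx : f xs + dot (- (A^T *m ys)) (x k.+1 - xs) <= f (x k.+1) := xs_sub _ Xx.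
have sy : g ys + dot (A *m xs) (y k.+1 - ys) <= g (y k.+1) := ys_sub _ Yy.
have x_step : (tau k)^-1 *: (x k - tau k *: (A^T *m y k) - x k.+1) =
    Pres A tau x y k - A^T *m y k.+1.
  rewrite /Pres mulmxBr; apply/matrixP => i j; rewrite !mxE.
  by field; rewrite gt_eqF.
have y_step :
    (sigma k)^-1 *: (y k + sigma k *: (A *m (2 *: x k.+1 - x k)) - y k.+1) =
    Dres A sigma x y k + A *m x k.+1.
  rewrite /Dres !mulmxBr -scalemxAr; apply/matrixP => i j; rewrite !mxE.
  by field; rewrite gt_eqF.
rewrite x_step -(opprB (x k.+1)) dotNr dotBl dot_trmxl in vx.
rewrite y_step -(opprB (y k.+1)) dotNr dotDl in vy.
rewrite dotNl dot_trmxl in sx.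
have coupling_x :
    dot (y k.+1) (A *m (x k.+1 - xs)) - dot ys (A *m (x k.+1 - xs)) =
    dot (A *m (x k.+1 - xs)) (y k.+1 - ys) by rewrite -dotBl dotC.
have coupling_y :
    dot (A *m x k.+1) (y k.+1 - ys) - dot (A *m xs) (y k.+1 - ys) =
    dot (A *m (x k.+1 - xs)) (y k.+1 - ys) by rewrite -dotBl -mulmxBr.
lra.
Qed.

Lemma pdhg_energy_decrease k :
  Q k (x k.+1 - xs) (y k.+1 - ys) + Q k (dx k) (dy k) <= pdhg_energy k.
Proof.
have -> : pdhg_energy k = Q k ((x k.+1 - xs) + dx k) ((y k.+1 - ys) + dy k).
  by congr Qform; apply/matrixP => i j; rewrite !mxE; ring.
by rewrite [leRHS]QformD lerDl pmulr_rge0 //; exact: pdhg_monotone.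
Qed.

(* What (C1) or (C2) provides: the energy controls [H_k] up to a constant, and
   the increments are coercive for [M_k]. Only [x j] with [j > 0] lie in [X]. *)
Definition pdhg_coercive (al be ga : R) : Prop :=
  [/\ 0 < al, 0 <= be, 0 < ga,
    forall k j, (0 < k)%N -> (0 < j)%N ->
      H k (x j - xs) (y j - ys) <= al * Q k (x j - xs) (y j - ys) + be &
    forall k, (0 < k)%N -> ga * H k (dx k) (dy k) <= Q k (dx k) (dy k)].

Lemma pdhg_coercive_small_steps :
  (exists L, (forall k, (0 < k)%N -> tau k * sigma k < L) /\ L * rhoAtA A < 1) ->
  exists al be ga, pdhg_coercive al be ga.
Proof.
move=> [L [ts_lt rL_lt1]].
set r := Num.max (rhoAtA A) 0.
have r_ge0 : 0 <= r by rewrite le_max lexx orbT.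
have rL : r * L < 1.
  have [rho_ge0|rho_lt0] := lerP 0 (rhoAtA A).
    by rewrite /r max_l // mulrC.
  have L_gt0 : 0 < L by apply: lt_trans (ts_lt 1%N isT); rewrite mulr_gt0.
  by rewrite /r max_r ?ltW // mul0r.
have A_le a : sqnorm (A *m a) <= r * sqnorm a.
  apply: le_trans (sqnorm_mulmx_le_rhoAtA A a) _.
  by apply: ler_wpM2r; [exact: sqnorm_ge0 | rewrite le_max lexx].
set ga := (1 - r * L) / 2; have ga_gt0 : 0 < ga by rewrite divr_gt0 //; lra.
have coer k a b : (0 < k)%N -> ga * H k a b <= Q k a b.
  move=> k_gt0; exact: (Hform_le_Qform_small_step _ (tau_gt0 k) (sigma_gt0 k)
    (ltW (ts_lt k k_gt0)) r_ge0 rL (A_le a)).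
exists ga^-1, 0, ga; split; [by rewrite invr_gt0 | exact: lexx | exact: ga_gt0 | |].
- move=> k j k_gt0 _; rewrite addr0 -(ler_pM2l ga_gt0) mulrA mulfV ?gt_eqF // mul1r.
  exact: coer.
- by move=> k; apply: coer.
Qed.

Lemma pdhg_coercive_bounded_domain :
  (exists Bd, forall k, tau k <= Bd /\ sigma k <= Bd) ->
  (bounded_set X \/ bounded_set Y) ->
  (exists c, 0 < c < 1 /\ forall k, (0 < k)%N ->
     qnorm (Mmat A (tau k) (sigma k)) (col_mx (x k.+1 - x k) (y k.+1 - y k)) >=
     c * qnorm (Hmat N M (tau k) (sigma k)) (col_mx (x k.+1 - x k) (y k.+1 - y k))) ->
  exists al be ga, pdhg_coercive al be ga.
Proof.
move=> [Bd Bd_ge] X_or_Y_bdd [c [/andP[c_gt0 _] c_le]].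
have Bd_ge0 : 0 <= Bd by apply: le_trans (ltW (tau_gt0 0%N)) (Bd_ge 0%N).1.
have incr k : (0 < k)%N -> c * H k (dx k) (dy k) <= Q k (dx k) (dy k).
  move=> k_gt0; have := c_le k k_gt0.
  by rewrite -(opprB (x k)) -(opprB (y k)) qnorm_Mmat qnorm_Hmat QformN HformN.
have iterate_in j : (0 < j)%N -> X (x j) /\ Y (y j).
  by case: j => // j _; have [[Xx _] [Yy _]] := pdhg j.
case: X_or_Y_bdd => [/(bounded_set_sqnorm_le xs) | /(bounded_set_sqnorm_le ys)].
  all: move=> [b [b_ge0 b_le]].
- exists 2, (4 * Bd * frob A * b), c; split => // [|k j _ j_gt0].
    by rewrite !mulr_ge0 ?frob_ge0.
  have := Hform_le_Qform A (x j - xs) (y j - ys) (tau_gt0 k) (sigma_gt0 k).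
  move/le_trans; apply.
  rewrite lerD2l -!mulrA ler_pM2l //.
  apply: ler_pM; [exact: ltW | exact: sqnorm_ge0 | exact: (Bd_ge k).2 |].
  apply: le_trans (sqnorm_mulmx_le_frob A _) _.
  by apply: ler_wpM2l; [exact: frob_ge0 | apply/b_le/(iterate_in j j_gt0).1].
- exists 2, (4 * Bd * frob A^T * b), c; split => // [|k j _ j_gt0].
    by rewrite !mulr_ge0 ?frob_ge0.
  rewrite -Hform_sym -Qform_trmx.
  have := Hform_le_Qform A^T (y j - ys) (x j - xs) (sigma_gt0 k) (tau_gt0 k).
  move/le_trans; apply.
  rewrite lerD2l -!mulrA ler_pM2l //.
  apply: ler_pM; [exact: ltW | exact: sqnorm_ge0 | exact: (Bd_ge k).1 |].
  apply: le_trans (sqnorm_mulmx_le_frob A^T _) _.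
  by apply: ler_wpM2l; [exact: frob_ge0 | apply/b_le/(iterate_in j j_gt0).2].
Qed.

Lemma pdhg_lyapunov_step al be ga k : pdhg_coercive al be ga ->
  (0 < k)%N -> phi tau sigma k <= 2^-1 ->
  pdhg_energy k.+1 + be / al <=
    (1 + 2 * al * phi tau sigma k) * (pdhg_energy k + be / al) - Q k (dx k) (dy k).
Proof.
move=> [al_gt0 be_ge0 ga_gt0 H_le HD_le] k_gt0 phi_le.
have p_ge0 := phi_ge0 tau sigma k.
have tau_drop := tau_drop_le_phi tau sigma k.
have sigma_drop := sigma_drop_le_phi tau sigma k.
have decrease := pdhg_energy_decrease k.
have change : pdhg_energy k.+1 <= Q k (x k.+1 - xs) (y k.+1 - ys) +
    phi tau sigma k * H k.+1 (x k.+1 - xs) (y k.+1 - ys).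
  exact: Qform_step_le.
have double :
    H k.+1 (x k.+1 - xs) (y k.+1 - ys) <= 2 * H k (x k.+1 - xs) (y k.+1 - ys).
  exact: (Hform_step_le2 _ _ _ _ _ _ tau_drop sigma_drop phi_le).
have := ler_wpM2l (ler0n _ 2) (H_le k k.+1 k_gt0 isT).
move/(le_trans double)/(ler_wpM2l p_ge0).
have q_ge0 : 0 <= Q k (dx k) (dy k).
  apply: le_trans (HD_le k k_gt0).
  by apply: mulr_ge0; [exact: ltW | exact: Hform_ge0].
have := mulr_ge0 (mulr_ge0 (ltW (mulr_gt0 (ltr0Sn _ 1) al_gt0)) p_ge0) q_ge0.
have : 0 <= 2 * al * phi tau sigma k *
    (pdhg_energy k - Q k (x k.+1 - xs) (y k.+1 - ys) - Q k (dx k) (dy k)).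
  apply: mulr_ge0; first by rewrite !mulr_ge0 // ltW.
  by rewrite -addrA -opprD subr_ge0.
have : al * phi tau sigma k * (be / al) = phi tau sigma k * be by field; rewrite gt_eqF.
lra.
Qed.

Lemma pdhg_increments_cvg0 al be ga : pdhg_coercive al be ga ->
  (exists C, forall n, \sum_(k < n) phi tau sigma k < C) ->
  (fun k => Q k (dx k) (dy k)) @ \oo --> 0.
Proof.
move=> coer phi_lt; have [al_gt0 be_ge0 ga_gt0 H_le HD_le] := coer.
set e := Num.min 2^-1 (2 * (2 * al))^-1.
have e_gt0 : 0 < e.
  by rewrite lt_min; apply/andP; split; rewrite // invr_gt0 !mulr_gt0.
have [K0 tail_le] :=
  nneg_series_tail_le (phi_ge0 tau sigma) (phi_bounded_sum phi_lt) e_gt0.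
set K := K0.+1.
have tail_K n : \sum_(j < n) phi tau sigma (K + j)%N <= e by apply: tail_le.
have phi_le k : (K <= k)%N -> phi tau sigma k <= 2^-1.
  move=> /ltnW K0k; have := tail_le k 1%N K0k; rewrite big_ord1 addn0.
  by move/le_trans; apply; rewrite ge_min lexx.
pose W k := pdhg_energy k + be / al.
have q_ge0 k : (0 < k)%N -> 0 <= Q k (dx k) (dy k).
  move=> k_gt0; apply: le_trans (HD_le k k_gt0).
  by apply: mulr_ge0; [exact: ltW | exact: Hform_ge0].
have W_ge0 k : (0 < k)%N -> 0 <= W k.
  move=> k_gt0; have := Hform_ge0 (x k - xs) (y k - ys) (tau_gt0 k) (sigma_gt0 k).
  move/le_trans/(_ (H_le k k k_gt0 k_gt0)).
  have -> : W k = (al * pdhg_energy k + be) / al by rewrite /W; field; rewrite gt_eqF.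
  by move=> num_ge0; rewrite divr_ge0 // ltW.
have K_gt0 : (0 < K)%N by [].
have e_le : e <= (2 * (2 * al))^-1 by rewrite ge_min lexx orbT.
have sum_q := @perturbed_descent_sum_le _ W (fun k => Q k (dx k) (dy k))
  (phi tau sigma) (2 * al) K (mulr_gt0 (ltr0Sn _ 1) al_gt0)
  (fun k Kk => W_ge0 k (leq_trans K_gt0 Kk))
  (fun k Kk => q_ge0 k (leq_trans K_gt0 Kk))
  (phi_ge0 tau sigma)
  (fun k Kk => pdhg_lyapunov_step coer (leq_trans K_gt0 Kk) (phi_le k Kk))
  (fun n => le_trans (tail_K n) e_le).
rewrite -(cvg_shiftn K); apply: nneg_series_cvg0 => [k|].
  by rewrite q_ge0 // addnS.
exists (2 * W K) => n; under eq_bigr do rewrite /= addnC; exact: sum_q.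
Qed.

Lemma pdhg_residual_cvg0 al be ga : pdhg_coercive al be ga ->
  (exists Bd, forall k, tau k <= Bd /\ sigma k <= Bd) ->
  (exists C, forall n, \sum_(k < n) phi tau sigma k < C) ->
  (fun k => sqnorm (Pres A tau x y k) + sqnorm (Dres A sigma x y k)) @ \oo --> 0.
Proof.
move=> coer [Bd Bd_ge] phi_lt; have [_ _ ga_gt0 _ HD_le] := coer.
have [lo [K [lo_gt0 lo_le]]] := stepsizes_eventually_ge tau_gt0 sigma_gt0 phi_lt.
set C := (2 / lo + 2 * (frob A + frob A^T) * Bd) / ga.
apply: (@squeeze_cvgr _ _ _ _ (fun=> 0) (fun k => C * Q k (dx k) (dy k))).
- exists (maxn K 1) => // k /=; rewrite geq_max => /andP[Kk k_gt0].
  rewrite addr_ge0 ?sqnorm_ge0 //=.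
  have [lo_tau lo_sigma] := lo_le k Kk; have [tau_Bd sigma_Bd] := Bd_ge k.
  have tau_in : lo <= tau k <= Bd by rewrite lo_tau tau_Bd.
  have sigma_in : lo <= sigma k <= Bd by rewrite lo_sigma sigma_Bd.
  have Bd_ge0 : 0 <= Bd by apply: le_trans tau_Bd; apply: ltW.
  have := residual_le_Hform A (x k - x k.+1) (y k - y k.+1) lo_gt0 tau_in sigma_in.
  move/le_trans; apply.
  rewrite /C -[leRHS]mulrA; apply: ler_wpM2l.
    apply: addr_ge0; first by rewrite divr_ge0 // ltW.
    by rewrite !mulr_ge0 // addr_ge0 // frob_ge0.
  by rewrite mulrC ler_pdivlMr // mulrC HD_le.
- exact: cvg_cst.
- rewrite -(mulr0 C); apply: cvgM; first exact: cvg_cst.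
  exact: pdhg_increments_cvg0 coer phi_lt.
Qed.

End PDHG.

Unset Implicit Arguments.

Theorem mainTheorem6 (R : realType) (M N : nat) (A : 'M[R]_(M, N))
    (f : 'cV[R]_N -> R) (g : 'cV[R]_M -> R)
    (X : set 'cV[R]_N) (Y : set 'cV[R]_M)
    (tau sigma : nat -> R) (x : nat -> 'cV[R]_N) (y : nat -> 'cV[R]_M) :
  convex_fun f -> convex_fun g -> convex_set X -> convex_set Y ->
  (exists (xs : 'cV[R]_N) (ys : 'cV[R]_M),
     subgrad f X xs (- (A^T *m ys)) /\ subgrad g Y ys (A *m xs)) ->
  (forall k, 0 < tau k) -> (forall k, 0 < sigma k) ->
  pdhg_iter A f g X Y tau sigma x y ->
  (* (A) *)
  (exists B : R, forall k, tau k <= B /\ sigma k <= B) ->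
  (* (B) *)
  (exists Cphi : R, forall n, \sum_(k < n) phi tau sigma k < Cphi) ->
  (* (C1) or (C2) *)
  ((exists L : R, (forall k, (0 < k)%N -> tau k * sigma k < L) /\
                  L * rhoAtA A < 1)
   \/
   ((bounded_set X \/ bounded_set Y) /\
    exists c : R, 0 < c < 1 /\
      forall k, (0 < k)%N ->
        qnorm (Mmat A (tau k) (sigma k)) (col_mx (x k.+1 - x k) (y k.+1 - y k))
        >= c * qnorm (Hmat N M (tau k) (sigma k)) (col_mx (x k.+1 - x k) (y k.+1 - y k)))) ->
  (fun k => sqnorm (Pres A tau x y k) + sqnorm (Dres A sigma x y k)) @ \oo --> 0.
Proof.
move=> f_cvx g_cvx X_cvx Y_cvx [xs [ys [xs_opt ys_opt]]] tau_gt0 sigma_gt0 pdhg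
  stepsizes_bdd phi_summable step_cond.
have [al [be [ga coer]]] :
    exists al be ga, pdhg_coercive A tau sigma x y xs ys al be ga.
  case: step_cond => [small_steps | [domain_bdd metric_ge]].
  - exact: pdhg_coercive_small_steps x y xs ys tau_gt0 sigma_gt0 small_steps.
  - exact: pdhg_coercive_bounded_domain xs ys tau_gt0 sigma_gt0 pdhg
      stepsizes_bdd domain_bdd metric_ge.
exact (pdhg_residual_cvg0 f_cvx g_cvx X_cvx Y_cvx xs_opt ys_opt tau_gt0 sigma_gt0
  pdhg coer stepsizes_bdd phi_summable).
Qed.
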